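(* Let $\phi_1,\phi_2$ be as in the context and let $\det J=\phi_{1,x}\phi_{2,y}-\phi_{1,y}\phi_{2,x}$ (assumed invertible as a formal series). Then $\phi_1,\phi_2$ satisfy the pre-reduced hierarchy $\big((\det J)^{-1}\,\Phi_1\wedge\Phi_2\big)_-=0$ if and only if for all $n,j\ge1$ $$\partial_{t_n}\vec\phi=\left(\Big((\det J)^{-1}\begin{vmatrix}\phi_{1,t_n}&\phi_{2,t_n}\\ \phi_{1,y}&\phi_{2,y}\end{vmatrix}\Big)_+\partial_x+\Big((\det J)^{-1}\begin{vmatrix}\phi_{2,t_n}&\phi_{1,t_n}\\ \phi_{2,x}&\phi_{1,x}\end{vmatrix}\Big)_+\partial_y\right)\vec\phi,$$ $$\lambda\partial_{z_j}\vec\phi=\left(\Big((\det J)^{-1}\begin{vmatrix}\lambda\phi_{1,z_j}&\lambda\phi_{2,z_j}\\ \phi_{1,y}&\phi_{2,y}\end{vmatrix}\Big)_+\partial_x+\Big((\det J)^{-1}\begin{vmatrix}\lambda\phi_{2,z_j}&\lambda\phi_{1,z_j}\\ \phi_{2,x}&\phi_{1,x}\end{vmatrix}\Big)_+\partial_y\right)\vec\phi.$$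
   Context: Independent variables are $x,y$ and two infinite families $t_1,t_2,\dots$ and $z_1,z_2,\dots$. $\lambda$ is a formal spectral parameter; for a formal Laurent series, $(\cdot)_+$ is the part with nonnegative powers of $\lambda$ and $(\cdot)_-$ the part with negative powers. Consider formal series $\phi_1=-y+\sum_{j\ge2}z_j\lambda^{j-1}+\sum_{k\ge1}g_k\lambda^{-k}$, $\phi_2=x+t_1\lambda+\sum_{n\ge2}t_n\lambda^n+\sum_{m\ge1}f_m\lambda^{-m}$, with $g_k,f_m$ functions of $(x,y,t_1,t_2,\dots,z_1,z_2,\dots)$; $\vec\phi=(\phi_1,\phi_2)^T$ and vector fields act componentwise. Define $\Phi_i=\phi_{i,x}dx+\phi_{i,y}dy+\sum_{n\ge1}\phi_{i,t_n}dt_n+\lambda\sum_{j\ge1}\phi_{i,z_j}dz_j$. The condition $\big((\det J)^{-1}\Phi_1\wedge\Phi_2\big)_-=0$ means: for every pair of variables $a,b$ among $x,y,t_n,z_j$, the negative-power part of $(\det J)^{-1}\lambda^{\epsilon}(\phi_{1,a}\phi_{2,b}-\phi_{1,b}\phi_{2,a})$ vanishes, where $\epsilon$ is the number of $z$-variables among $a,b$. Subscripts denote partial derivatives. *)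

From HB Require Import structures.
From mathcomp Require Import all_boot all_order all_algebra.
Set Implicit Arguments. Unset Strict Implicit. Unset Printing Implicit Defensive.
Import Order.TTheory GRing.Theory Num.Theory.
Local Open Scope ring_scope.

(* ---------- Formal Laurent series in lambda with finitely many positive
   powers (i.e. elements of A((lambda^{-1}))).  A series is given by an
   upper bound [ltop] on its degree and a raw coefficient function; its
   actual coefficients [coef] are the raw ones truncated above [ltop], so
   every record denotes a genuine element of A((lambda^{-1})). *)
Record lser (A : Type) := LSer { ltop : int; lraw : int -> A }.

Section LaurentSeries.
Variable A : comNzRingType.

Definition coef (s : lser A) (k : int) : A := if k <= ltop s then lraw s k else 0.

Definition lseq (a b : lser A) : Prop := forall k : int, coef a k = coef b k.

Definition lone : lser A := LSer 0 (fun k : int => if k == 0 then 1 else 0).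

Definition ladd (a b : lser A) : lser A :=
  LSer (Num.max (ltop a) (ltop b)) (fun k => coef a k + coef b k).

Definition lopp (a : lser A) : lser A := LSer (ltop a) (fun k => - coef a k).

Definition lsub (a b : lser A) : lser A := ladd a (lopp b).

(* Cauchy product: the coefficient of lambda^k is
   sum_{i + j = k, i <= ltop a, j <= ltop b} a_i b_j (a finite sum). *)
Definition lmul (a b : lser A) : lser A :=
  LSer (ltop a + ltop b)
    (fun k => \sum_(0 <= i < (absz (ltop a + ltop b - k)%R).+1)
                 coef a (ltop a - i%:Z) * coef b (k - ltop a + i%:Z)).

Definition llam (a : lser A) : lser A := LSer (ltop a + 1) (fun k => coef a (k - 1)).

Definition llamn (e : nat) (a : lser A) : lser A := iter e llam a.

Definition lpos (a : lser A) : lser A :=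
  LSer (ltop a) (fun k => if 0 <= k then coef a k else 0).

Definition lneg_zero (a : lser A) : Prop := forall k : int, k < 0 -> coef a k = 0.

Definition det2 (a b c d : lser A) : lser A := lsub (lmul a d) (lmul b c).

End LaurentSeries.

(* ENCODING: [Vt n] is t_{n+1} and [Vz n] is z_{n+1} (n : nat), so every
   constructor denotes exactly one genuine variable. ---------- *)
Inductive var := Vx | Vy | Vt of nat | Vz of nat.

Definition is_zvar (v : var) : nat := if v is Vz _ then 1%N else 0%N.

(* an upper bound on the lambda-degree of d phi_i / d v *)
Definition vdeg (v : var) : int :=
  match v with Vx | Vy => 0 | Vt n => (n.+1)%:Z | Vz n => n%:Z end.

Section Phi.
Variable A : comNzRingType.
(* D v = partial derivative with respect to the variable v acting on the
   coefficient ring A of "functions of (x,y,t,z)"; coord v is the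
   coordinate function v itself. *)
Variable D : var -> A -> A.
Variable coord : var -> A.
(* g k = g_k, f m = f_m for k, m >= 1 (the values g 0, f 0 are never used) *)
Variables g f : nat -> A.

(* phi_1 = -y + sum_{j>=2} z_j lambda^{j-1} + sum_{k>=1} g_k lambda^{-k} *)
Definition phi1c (k : int) : A :=
  if k == 0 then - coord Vy
  else if 0 < k then coord (Vz (absz k))   (* z_{k+1} lambda^k *)
  else g (absz k).

(* phi_2 = x + sum_{n>=1} t_n lambda^n + sum_{m>=1} f_m lambda^{-m} *)
Definition phi2c (k : int) : A :=
  if k == 0 then coord Vx
  else if 0 < k then coord (Vt (absz k).-1) (* t_k lambda^k *)
  else f (absz k).

Definition dphi1 (v : var) : lser A := LSer (vdeg v) (fun k => D v (phi1c k)).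
Definition dphi2 (v : var) : lser A := LSer (vdeg v) (fun k => D v (phi2c k)).

Definition detJ : lser A := det2 (dphi1 Vx) (dphi2 Vx) (dphi1 Vy) (dphi2 Vy).

(* u plays the role of (det J)^{-1} *)
Variable u : lser A.

Definition prereduced_hierarchy : Prop :=
  forall a b : var,
    lneg_zero (lmul u (llamn (is_zvar a + is_zvar b)
                  (lsub (lmul (dphi1 a) (dphi2 b)) (lmul (dphi1 b) (dphi2 a))))).

(* For a vector (p1, p2) (= d_{t_n} phi or lambda d_{z_j} phi), the
   components of
   ( (u |p1 p2; phi1y phi2y|)_+ d_x + (u |p2 p1; phi2x phi1x|)_+ d_y ) phi *)
Definition lax_rhs1 (p1 p2 : lser A) : lser A :=
  ladd (lmul (lpos (lmul u (det2 p1 p2 (dphi1 Vy) (dphi2 Vy)))) (dphi1 Vx))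
       (lmul (lpos (lmul u (det2 p2 p1 (dphi2 Vx) (dphi1 Vx)))) (dphi1 Vy)).
Definition lax_rhs2 (p1 p2 : lser A) : lser A :=
  ladd (lmul (lpos (lmul u (det2 p1 p2 (dphi1 Vy) (dphi2 Vy)))) (dphi2 Vx))
       (lmul (lpos (lmul u (det2 p2 p1 (dphi2 Vx) (dphi1 Vx)))) (dphi2 Vy)).

Definition lax_eq (p1 p2 : lser A) : Prop :=
  lseq p1 (lax_rhs1 p1 p2) /\ lseq p2 (lax_rhs2 p1 p2).

Definition lax_system : Prop :=
  (forall n : nat, lax_eq (dphi1 (Vt n)) (dphi2 (Vt n))) /\
  (forall j : nat, lax_eq (llam (dphi1 (Vz j))) (llam (dphi2 (Vz j)))).

End Phi.

From HB Require Import structures.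
From mathcomp Require Import all_boot all_order all_algebra.
From mathcomp Require Import zify.
From Stdlib Require Import Ring Setoid Morphisms.
Import Order.TTheory GRing.Theory Num.Theory.
Local Open Scope ring_scope.

(* Everything happens in the commutative ring A((lambda^-1)), where series
   without negative powers form the subring A[lambda].  Write X = phi_x,
   Y = phi_y and u = (det J)^-1.  For any vector p, Cramer's rule in the
   frame (X, Y) gives p = u |p Y| X + u |X p| Y, so the Lax equation for p
   says exactly that both coefficients u |p Y| and u |X p| lie in A[lambda];
   these are two of the wedge conditions.  Conversely, if every phi_v (times
   lambda for z-variables) is an A[lambda]-combination P X + Q Y, then
   u (phi_a /\ phi_b) = P Q' - P' Q lies in A[lambda].  No property of the
   derivations is used. *)

Section LaurentSeriesRing.
Context {A : comNzRingType}.
Implicit Types a b c : lser A.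

Lemma coef_gt_ltop a k : ltop a < k -> coef a k = 0.
Proof. by move=> H; rewrite /coef leNgt H. Qed.

Lemma coef_ladd a b k : coef (ladd a b) k = coef a k + coef b k.
Proof.
rewrite {1}/coef /=; case: ifP => // /negbT; rewrite -ltNge => H.
have Ha : ltop a < k by apply: le_lt_trans H; rewrite le_max lexx.
have Hb : ltop b < k by apply: le_lt_trans H; rewrite le_max lexx orbT.
by rewrite !coef_gt_ltop // addr0.
Qed.

Lemma coef_lopp a k : coef (lopp a) k = - coef a k.
Proof.
rewrite {1}/coef /=; case: ifP => // /negbT; rewrite -ltNge => H.
by rewrite coef_gt_ltop ?oppr0.
Qed.

Lemma coef_llam a k : coef (llam a) k = coef a (k - 1).
Proof.
rewrite {1}/coef /=; case: ifP => // /negbT; rewrite -ltNge => H.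
by rewrite coef_gt_ltop //; lia.
Qed.

Lemma coef_lpos a k : coef (lpos a) k = if 0 <= k then coef a k else 0.
Proof.
rewrite {1}/coef /=; case: ifP => // /negbT; rewrite -ltNge => H.
by case: ifP => // _; rewrite coef_gt_ltop //; lia.
Qed.

Definition lzero : lser A := LSer 0 (fun _ => 0).

Lemma coef_lzero k : coef lzero k = 0.
Proof. by rewrite /coef /=; case: ifP. Qed.

Definition lmono (d : int) : lser A := LSer d (fun k => if k == d then 1 else 0).

Lemma coef_lmono d k : coef (lmono d) k = if k == d then 1 else 0.
Proof.
rewrite /coef /=; case: ifP => // /negbT; rewrite -ltNge => H.
by case: eqP => // E; lia.
Qed.

Lemma lone_lmono : lone A = lmono 0.
Proof. by []. Qed.

(* A product coefficient is a finite sum over i <= ltop a and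
   k - i <= ltop b; any window [hi - n, hi] covering that range computes it,
   which is what makes commutativity and associativity provable. *)
Definition window_sum (F : int -> A) (hi : int) (n : nat) := \sum_(t < n) F (hi - t%:Z).

Section WindowSum.
Variables (F : int -> A) (lo up : int).
Hypothesis F_lt_lo : forall i, i < lo -> F i = 0.
Hypothesis F_gt_up : forall i, up < i -> F i = 0.

Lemma window_sum_padr hi n e : hi - n%:Z < lo -> window_sum F hi (n + e) = window_sum F hi n.
Proof.
move=> Hn; elim: e => [|e IH]; first by rewrite addn0.
by rewrite addnS /window_sum big_ord_recr /= -/(window_sum F hi (n + e)) IH F_lt_lo ?addr0 //; lia.
Qed.

Lemma window_sum_padl hi n m : up <= hi -> window_sum F (hi + m%:Z) (n + m) = window_sum F hi n.
Proof.
move=> Hhi; elim: m => [|m IH]; first by rewrite addn0 addr0.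
rewrite -IH addnS /window_sum big_ord_recl /= F_gt_up; last lia.
by rewrite add0r; apply: eq_bigr => t _; congr F; rewrite /bump /=; lia.
Qed.

Lemma eq_window_sum hi n hi' n' :
  up <= hi -> hi - n%:Z < lo -> up <= hi' -> hi' - n'%:Z < lo ->
  window_sum F hi n = window_sum F hi' n'.
Proof.
move=> H1 H2 H3 H4.
wlog [m Em] : hi n hi' n' H1 H2 H3 H4 / exists m : nat, hi' = hi + m%:Z.
  move=> wlog_le; case: (lerP hi hi') => H.
    by apply: wlog_le => //; exists (absz (hi' - hi)); lia.
  by symmetry; apply: wlog_le => //; exists (absz (hi - hi')); lia.
subst hi'.
rewrite -(window_sum_padl hi n m H1) -(window_sum_padr (hi + m%:Z) (n + m) n'); last lia.
by rewrite -(window_sum_padr (hi + m%:Z) n' (n + m) H4) addnC.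
Qed.

End WindowSum.

Lemma exists_window (hi lo : int) : exists n : nat, forall n', (n <= n')%N -> hi - n'%:Z < lo.
Proof. by exists (absz (hi - lo)).+1 => n' Hn; lia. Qed.

Definition cauchy_term a b k := fun i => coef a i * coef b (k - i).

Lemma coef_lmul a b k hi n : ltop a <= hi -> hi - n%:Z < k - ltop b ->
  coef (lmul a b) k = window_sum (cauchy_term a b k) hi n.
Proof.
move=> H1 H2.
have Hlo i : i < k - ltop b -> cauchy_term a b k i = 0.
  by move=> Hi; rewrite /cauchy_term (@coef_gt_ltop b) ?mulr0 //; lia.
have Hup i : ltop a < i -> cauchy_term a b k i = 0.
  by move=> Hi; rewrite /cauchy_term coef_gt_ltop ?mul0r.
rewrite (@eq_window_sum _ _ _ Hlo Hup _ _ (ltop a) (absz (ltop a + ltop b - k)%R).+1) ?lexx //;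
  last lia.
rewrite /coef /=; case: ifP => H.
  by rewrite big_mkord; apply: eq_bigr => t _; rewrite /cauchy_term; congr (_ * coef b _); lia.
rewrite /window_sum big1 // => t _; rewrite /cauchy_term (@coef_gt_ltop b) ?mulr0 //.
by move/negbT: H; rewrite -ltNge; lia.
Qed.

Lemma coef_lmono_mul d a k : coef (lmul (lmono d) a) k = coef a (k - d).
Proof.
have [n Hn] := exists_window d (k - ltop a).
rewrite (@coef_lmul (lmono d) a k d n.+1) ?lexx ?Hn //.
rewrite /window_sum big_ord_recl /= big1 ?addr0.
  by rewrite /cauchy_term coef_lmono; case: eqP => [_|]; [rewrite mul1r; congr coef|]; lia.
move=> t _; rewrite /cauchy_term coef_lmono; case: eqP => [|_]; last by rewrite mul0r.
by rewrite /bump /=; lia.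
Qed.

#[export] Instance lseq_equiv : Equivalence (@lseq A).
Proof. by split=> [x k | x y H k | x y z H1 H2 k] //; rewrite H1. Qed.

#[export] Instance ladd_proper : Proper (@lseq A ==> @lseq A ==> @lseq A) (@ladd A).
Proof. by move=> x y H x' y' H' k; rewrite !coef_ladd H H'. Qed.

#[export] Instance lopp_proper : Proper (@lseq A ==> @lseq A) (@lopp A).
Proof. by move=> x y H k; rewrite !coef_lopp H. Qed.

#[export] Instance lsub_proper : Proper (@lseq A ==> @lseq A ==> @lseq A) (@lsub A).
Proof. by move=> x y H x' y' H'; rewrite /lsub H H'. Qed.

#[export] Instance lmul_proper : Proper (@lseq A ==> @lseq A ==> @lseq A) (@lmul A).
Proof.
move=> a a' Ha b b' Hb k.
set hi := Num.max (ltop a) (ltop a').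
have [n1 Hn1] := exists_window hi (k - ltop b).
have [n2 Hn2] := exists_window hi (k - ltop b').
rewrite (@coef_lmul a b k hi (n1 + n2)) ?le_max ?lexx ?Hn1 ?leq_addr //.
rewrite (@coef_lmul a' b' k hi (n1 + n2)) ?le_max ?lexx ?orbT ?Hn2 ?leq_addl //.
by apply: eq_bigr => t _; rewrite /cauchy_term Ha Hb.
Qed.

Lemma lneg_zero_eq a b : lseq a b -> lneg_zero a -> lneg_zero b.
Proof. by move=> E Ha k Hk; rewrite -E Ha. Qed.

#[export] Instance lneg_zero_proper : Proper (@lseq A ==> iff) (@lneg_zero A).
Proof. by move=> a b E; split; apply: lneg_zero_eq. Qed.

Lemma lmulC a b : lseq (lmul a b) (lmul b a).
Proof.
move=> k; have [n /(_ n (leqnn n)) Hn] := exists_window (ltop a) (k - ltop b).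
rewrite (@coef_lmul a b k (ltop a) n) ?lexx //.
rewrite (@coef_lmul b a k (k - ltop a + n%:Z - 1) n); [|lia|lia].
rewrite /window_sum (reindex_inj rev_ord_inj) /=; apply: eq_bigr => t _.
rewrite /cauchy_term mulrC; have := ltn_ord t => Ht.
by congr (coef _ _ * coef _ _); lia.
Qed.

Lemma lmulA a b c : lseq (lmul a (lmul b c)) (lmul (lmul a b) c).
Proof.
move=> k; set ta := ltop a; set tb := ltop b; set tc := ltop c.
have [n /(_ n (leqnn n)) Hn] := exists_window (ta + tb) (k - tc).
have [m1 Hm1] := exists_window ta (ta + tb - n%:Z - tb).
have [m2 Hm2] := exists_window ta (k - (tb + tc)).
have {}Hm1 := Hm1 _ (leq_addr m2 m1); have {}Hm2 := Hm2 _ (leq_addl m1 m2).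
rewrite (@coef_lmul a (lmul b c) k ta (m1 + m2)) ?lexx //.
rewrite (@coef_lmul (lmul a b) c k (ta + tb) n) ?lexx //.
have inner : forall s : 'I_n, cauchy_term (lmul a b) c k (ta + tb - s%:Z) =
    \sum_(t < m1 + m2) coef a (ta - t%:Z) * coef b (ta + tb - s%:Z - (ta - t%:Z))
                       * coef c (k - (ta + tb - s%:Z)).
  move=> s; rewrite /cauchy_term (@coef_lmul a b _ ta (m1 + m2)) ?lexx //; last by have := ltn_ord s; lia.
  by rewrite /window_sum mulr_suml.
rewrite /window_sum (eq_bigr _ (fun s _ => inner s)) exchange_big /=.
apply: eq_bigr => t _; rewrite /cauchy_term (@coef_lmul b c _ (tb + t%:Z) n); [|lia|lia].
rewrite /window_sum mulr_sumr; apply: eq_bigr => s _.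
by rewrite /cauchy_term mulrA; congr (_ * coef _ _ * coef _ _); lia.
Qed.

Lemma lmulDl a b c : lseq (lmul (ladd a b) c) (ladd (lmul a c) (lmul b c)).
Proof.
move=> k; rewrite coef_ladd; set hi := ltop (ladd a b).
have [n /(_ n (leqnn n)) Hn] := exists_window hi (k - ltop c).
have Ha : ltop a <= hi by rewrite /= le_max lexx.
have Hb : ltop b <= hi by rewrite /= le_max lexx orbT.
rewrite (@coef_lmul (ladd a b) c k hi n) ?lexx // (@coef_lmul a c k hi n) //.
rewrite (@coef_lmul b c k hi n) // /window_sum -big_split /=.
by apply: eq_bigr => t _; rewrite /cauchy_term coef_ladd mulrDl.
Qed.

Lemma lseries_ring :
  ring_theory lzero (lone A) (@ladd A) (@lmul A) (@lsub A) (@lopp A) (@lseq A).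
Proof.
split=> [x k | x y k | x y z k | x k | | | | // | x k].
- by rewrite coef_ladd coef_lzero add0r.
- by rewrite !coef_ladd addrC.
- by rewrite !coef_ladd addrA.
- by rewrite lone_lmono coef_lmono_mul subr0.
- exact: lmulC.
- exact: lmulA.
- exact: lmulDl.
- by rewrite coef_ladd coef_lopp coef_lzero addrN.
Qed.

Lemma lseries_ring_ext : ring_eq_ext (@ladd A) (@lmul A) (@lopp A) (@lseq A).
Proof. by split; [exact: ladd_proper | exact: lmul_proper | exact: lopp_proper]. Qed.

Add Ring lseries_ring : lseries_ring (setoid lseq_equiv lseries_ring_ext).

Lemma llamn_lmono e a : lseq (llamn e a) (lmul (lmono e%:Z) a).
Proof.
elim: e => [|e IH] k; first by rewrite coef_lmono_mul subr0.
by rewrite [llamn _ _]/= coef_llam IH !coef_lmono_mul; congr coef; lia.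
Qed.

Lemma lmonoD (d e : int) : lseq (lmono (d + e)) (lmul (lmono d) (lmono e)).
Proof. by move=> k; rewrite coef_lmono_mul !coef_lmono; congr (if _ then _ else _); lia. Qed.

Lemma lneg_zero_lzero : lneg_zero lzero.
Proof. by move=> k _; rewrite coef_lzero. Qed.

Lemma lneg_zero_lone : lneg_zero (lone A).
Proof. by move=> k Hk; rewrite lone_lmono coef_lmono; case: eqP => //; lia. Qed.

Lemma lneg_zero_lpos a : lneg_zero (lpos a).
Proof. by move=> k Hk; rewrite coef_lpos; case: ifP => //; lia. Qed.

Lemma lneg_zero_lopp a : lneg_zero a -> lneg_zero (lopp a).
Proof. by move=> Ha k Hk; rewrite coef_lopp Ha ?oppr0. Qed.

Lemma lneg_zero_lsub a b : lneg_zero a -> lneg_zero b -> lneg_zero (lsub a b).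
Proof. by move=> Ha /lneg_zero_lopp Hb k Hk; rewrite coef_ladd Ha ?Hb ?addr0. Qed.

Lemma lneg_zero_lmul a b : lneg_zero a -> lneg_zero b -> lneg_zero (lmul a b).
Proof.
move=> Ha Hb k Hk; have [n Hn] := exists_window (ltop a) (k - ltop b).
rewrite (@coef_lmul a b k (ltop a) n) ?lexx ?Hn // /window_sum big1 // => t _.
rewrite /cauchy_term; case: (ltrP (ltop a - t%:Z) 0) => H; first by rewrite Ha ?mul0r.
by rewrite Hb ?mulr0 //; lia.
Qed.

Lemma lpos_id a : lneg_zero a -> lseq (lpos a) a.
Proof. by move=> Ha k; rewrite coef_lpos; case: ifP => // /negbT Hk; rewrite Ha //; lia. Qed.

Section Frame.
Context {X1 X2 Y1 Y2 u : lser A}.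
Hypothesis u_det : lseq (lmul u (det2 X1 X2 Y1 Y2)) (lone A).

Lemma lax_eq_of_wedges p1 p2 :
  lneg_zero (lmul u (lsub (lmul p1 Y2) (lmul Y1 p2))) ->
  lneg_zero (lmul u (lsub (lmul p1 X2) (lmul X1 p2))) ->
  lseq p1 (ladd (lmul (lpos (lmul u (det2 p1 p2 Y1 Y2))) X1)
                (lmul (lpos (lmul u (det2 p2 p1 X2 X1))) Y1)) /\
  lseq p2 (ladd (lmul (lpos (lmul u (det2 p1 p2 Y1 Y2))) X2)
                (lmul (lpos (lmul u (det2 p2 p1 X2 X1))) Y2)).
Proof.
move=> HY HX.
have -> : lseq (lpos (lmul u (det2 p1 p2 Y1 Y2))) (lmul u (det2 p1 p2 Y1 Y2)).
  by apply: lpos_id; move: HY; apply: lneg_zero_eq; rewrite /det2; ring.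
have -> : lseq (lpos (lmul u (det2 p2 p1 X2 X1))) (lmul u (det2 p2 p1 X2 X1)).
  by apply: lpos_id; move/lneg_zero_lopp: HX; apply: lneg_zero_eq; rewrite /det2; ring.
split.
- by transitivity (lmul p1 (lmul u (det2 X1 X2 Y1 Y2))); [rewrite u_det | rewrite /det2]; ring.
- by transitivity (lmul p2 (lmul u (det2 X1 X2 Y1 Y2))); [rewrite u_det | rewrite /det2]; ring.
Qed.

Lemma lneg_zero_wedge {p1 p2 r1 r2 P Q P' Q'} :
  lneg_zero P -> lneg_zero Q -> lneg_zero P' -> lneg_zero Q' ->
  lseq p1 (ladd (lmul P X1) (lmul Q Y1)) -> lseq p2 (ladd (lmul P X2) (lmul Q Y2)) ->
  lseq r1 (ladd (lmul P' X1) (lmul Q' Y1)) -> lseq r2 (ladd (lmul P' X2) (lmul Q' Y2)) ->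
  lneg_zero (lmul u (lsub (lmul p1 r2) (lmul r1 p2))).
Proof.
move=> HP HQ HP' HQ' -> -> -> ->.
have -> : lseq (lmul u (lsub (lmul (ladd (lmul P X1) (lmul Q Y1)) (ladd (lmul P' X2) (lmul Q' Y2)))
                             (lmul (ladd (lmul P' X1) (lmul Q' Y1)) (ladd (lmul P X2) (lmul Q Y2)))))
               (lsub (lmul P Q') (lmul P' Q)).
  by transitivity (lmul (lsub (lmul P Q') (lmul P' Q)) (lmul u (det2 X1 X2 Y1 Y2)));
    [rewrite /det2 | rewrite u_det]; ring.
by apply: lneg_zero_lsub; apply: lneg_zero_lmul.
Qed.

End Frame.

Section PrereducedHierarchy.
Context {D : var -> A -> A} {coord : var -> A} {g f : nat -> A} {u : lser A}.
Hypothesis u_detJ : lseq (lmul u (detJ D coord g f)) (lone A).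

Local Notation phi1_ := (dphi1 D coord g).
Local Notation phi2_ := (dphi2 D coord f).

Lemma lax_eq_of_prereduced v :
  prereduced_hierarchy D coord g f u ->
  lax_eq D coord g f u (llamn (is_zvar v) (phi1_ v)) (llamn (is_zvar v) (phi2_ v)).
Proof.
move=> H; apply: (lax_eq_of_wedges u_detJ).
- move: (H v Vy); rewrite addn0; apply: lneg_zero_eq; rewrite !llamn_lmono; ring.
- move: (H v Vx); rewrite addn0; apply: lneg_zero_eq; rewrite !llamn_lmono; ring.
Qed.

Lemma frame_decomposition v : lax_system D coord g f u ->
  exists P Q, [/\ lneg_zero P, lneg_zero Q,
    lseq (llamn (is_zvar v) (phi1_ v)) (ladd (lmul P (phi1_ Vx)) (lmul Q (phi1_ Vy))) &
    lseq (llamn (is_zvar v) (phi2_ v)) (ladd (lmul P (phi2_ Vx)) (lmul Q (phi2_ Vy)))].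
Proof.
case; rewrite /lax_eq /lax_rhs1 /lax_rhs2 => Ht Hz; case: v => [||n|j].
- exists (lone A), lzero; split; [exact: lneg_zero_lone | exact: lneg_zero_lzero | rewrite /llamn /=; ring ..].
- exists lzero, (lone A); split; [exact: lneg_zero_lzero | exact: lneg_zero_lone | rewrite /llamn /=; ring ..].
- have [E1 E2] := Ht n; do 2 eexists; split; last exact: E2.
  + exact: lneg_zero_lpos.
  + exact: lneg_zero_lpos.
  + exact: E1.
- have [E1 E2] := Hz j; do 2 eexists; split; last exact: E2.
  + exact: lneg_zero_lpos.
  + exact: lneg_zero_lpos.
  + exact: E1.
Qed.

Lemma prereduced_of_lax_system :
  lax_system D coord g f u -> prereduced_hierarchy D coord g f u.
Proof.
move=> H a b.
have [P [Q [HP HQ Ea1 Ea2]]] := frame_decomposition a H.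
have [P' [Q' [HP' HQ' Eb1 Eb2]]] := frame_decomposition b H.
move: (lneg_zero_wedge u_detJ HP HQ HP' HQ' Ea1 Ea2 Eb1 Eb2); apply: lneg_zero_eq.
by rewrite !llamn_lmono PoszD lmonoD; ring.
Qed.

End PrereducedHierarchy.

End LaurentSeriesRing.

Theorem theorem4p1 (A : comNzRingType) (D : var -> A -> A) (coord : var -> A)
  (g f : nat -> A)
  (HDadd : forall v a b, D v (a + b) = D v a + D v b)
  (HDmul : forall v a b, D v (a * b) = D v a * b + a * D v b)
  (HDcomm : forall v w a, D v (D w a) = D w (D v a))
  (Hcoord1 : forall v, D v (coord v) = 1)
  (Hcoord0 : forall v w, v <> w -> D v (coord w) = 0)
  (u : lser A) (Hu : lseq (lmul u (detJ D coord g f)) (lone A)) :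
  prereduced_hierarchy D coord g f u <-> lax_system D coord g f u.
Proof.
split=> [H | ]; last exact: prereduced_of_lax_system.
split=> [n | j]; first exact: (lax_eq_of_prereduced Hu (Vt n) H).
exact: (lax_eq_of_prereduced Hu (Vz j) H).
Qed.
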